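(* Let $n_1,\dots,n_m$ be positive integers, $N=n_1+\cdots+n_m$, and let $N_1,\dots,N_m$ be positive integers with $N_j\ge N-1$ for $j=1,\dots,m$. Define $Q(z)=\sum_{k=0}^N a_kz^k$ by $a_N=1$ and, for $k=0,1,\dots,N-1$, \[ a_{N-k-1}=\sum_{\ell=k}^{N-1}(-1)^{\ell+1}\frac{(\alpha_0-1)_{\ell-k}}{(\ell-k)!}\,\frac{(\alpha_0+\ell+1)_{N-\ell-1}}{(N-\ell-1)!}\prod_{j=1}^m\frac{(\alpha_j+\alpha_0+N_j-N+\ell+1)_{n_j}}{(\alpha_j+N_j-N+1)_{n_j}}, \] and for $j=1,\dots,m$ define $P_j(z)=\sum_{\mu=0}^{N_j}c_{j\mu}z^\mu$ with \[ c_{j\mu}=\sum_{k=0}^{\min\{N,\mu\}}a_k\frac{(\alpha_j)_{\mu-k}}{(\alpha_j+\alpha_0)_{\mu-k}}. \] Then $Q\neq0$, $\deg Q\le N$, $\deg P_j\le N_j$, and, as formal power series in $\mathbb{Q}[[z]]$, $\operatorname{ord}_{z=0}\big(Q(z)\varphi_j(z)-P_j(z)\big)\ge N_j+n_j+1$ for $j=1,\dots,m$. That is, $Q,P_1,\dots,P_m$ are type $(N;N_1,\dots,N_m)$ Padé approximation polynomials of the second kind for $\varphi_1,\dots,\varphi_m$.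
   Context: Let $m\ge1$ and let $\alpha_0,\alpha_1,\dots,\alpha_m$ be positive rational numbers with $\alpha_i-\alpha_j\notin\mathbb{Z}$ for $1\le i<j\le m$. Pochhammer symbol: $(x)_0=1$, $(x)_n=x(x+1)\cdots(x+n-1)$ for $n\ge1$. Define the formal power series $\varphi_j(z)=\sum_{n=0}^\infty\frac{(\alpha_j)_n}{(\alpha_j+\alpha_0)_n}z^n$, $j=1,\dots,m$. $\operatorname{ord}$ denotes the order of vanishing at $z=0$. Polynomials $Q\ne0,P_1,\dots,P_m$ are called type $(N;N_1,\dots,N_m)$ Padé approximation polynomials of the second kind for $\varphi_1,\dots,\varphi_m$ if $\deg Q\le N$, $\deg P_j\le N_j$ and $\operatorname{ord}(Q\varphi_j-P_j)\ge N_j+n_j+1$ for all $j$. *)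

From HB Require Import structures.
From mathcomp Require Import all_boot all_order all_algebra.
Set Implicit Arguments. Unset Strict Implicit. Unset Printing Implicit Defensive.
Import Order.TTheory GRing.Theory Num.Theory.
Local Open Scope ring_scope.

Definition poch (x : rat) (n : nat) : rat := \prod_(i < n) (x + i%:R).

(* n-th coefficient of phi_j(z) = sum_n (a_j)_n / (a_j + a_0)_n z^n *)
Definition phi_coef (alpha : nat -> rat) (j n : nat) : rat :=
  poch (alpha j) n / poch (alpha j + alpha 0%N) n.

Definition bigN (m : nat) (n : nat -> nat) : nat := \sum_(1 <= j < m.+1) n j.

(* a_i for i = 0..N : a_N = 1 and a_{N-k-1} given by the explicit formula
   with k = N - 1 - i. *)
Definition acoef (alpha : nat -> rat) (m : nat) (n Nj : nat -> nat) (i : nat)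
  : rat :=
  let N := bigN m n in
  if i == N then 1 else
  let k := (N - 1 - i)%N in
  \sum_(k <= l < N)
    (-1) ^+ l.+1
    * (poch (alpha 0%N - 1) (l - k) / (l - k)`!%:R)
    * (poch (alpha 0%N + l%:R + 1) (N - l - 1) / (N - l - 1)`!%:R)
    * \prod_(1 <= j < m.+1)
        (poch (alpha j + alpha 0%N + (Nj j)%:R - N%:R + l%:R + 1) (n j)
         / poch (alpha j + (Nj j)%:R - N%:R + 1) (n j)).

Definition Qpoly alpha m n Nj : {poly rat} :=
  \poly_(i < (bigN m n).+1) acoef alpha m n Nj i.

Definition ccoef alpha m n Nj (j mu : nat) : rat :=
  \sum_(0 <= k < (minn (bigN m n) mu).+1)
     acoef alpha m n Nj k * phi_coef alpha j (mu - k).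

Definition Ppoly alpha m n Nj (j : nat) : {poly rat} :=
  \poly_(mu < (Nj j).+1) ccoef alpha m n Nj j mu.

(* ord_{z=0}(Q(z) f(z) - P(z)) >= r for the formal power series f with
   coefficient sequence f : nat -> rat: all coefficients of z^k, k < r,
   of the formal power series Q f - P vanish. *)
Definition ord_ge (Q : {poly rat}) (f : nat -> rat) (P : {poly rat}) (r : nat)
  : Prop :=
  forall k : nat, (k < r)%N -> \sum_(i < k.+1) Q`_i * f (k - i)%N - P`_k = 0.

(* Write b_p := a_(N-p), and let H be the polynomial of degree <= N with H(0) = 1
   vanishing at the N nodes r_(j,s) := alpha_j + N_j - N + 1 + s (1 <= j <= m,
   s < n_j).  The polynomials E_p(x) := (x)_p (x + alpha_0 + p)_(N-p), p <= N, are
   triangular with respect to the nodes 0, -alpha_0, ..., -alpha_0 - (N-1), and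
   inverting that triangular system (a Chu-Vandermonde convolution) shows that the
   explicit a_k are exactly the coordinates of (alpha_0)_N H in the basis E_p: the
   product over j in the formula for a_(N-k-1) is H(-alpha_0 - l).
   For N_j < k <= N_j + n_j the coefficient of z^k in Q phi_j - P_j is
   sum_p b_p (alpha_j)_(t+p) / (alpha_j + alpha_0)_(t+p) with t = k - N, and each
   ratio is a fixed multiple of E_p(alpha_j + t); so the coefficient is a multiple
   of H(alpha_j + t) = H(r_(j, k-N_j-1)) = 0.  Lower coefficients vanish by the
   choice of P_j, and a_N = H(0) = 1 gives Q <> 0. *)

From mathcomp Require Import all_boot all_order all_algebra.
From mathcomp Require Import ring lra zify.
Set Implicit Arguments. Unset Strict Implicit. Unset Printing Implicit Defensive.
Import Order.TTheory GRing.Theory Num.Theory.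
Local Open Scope ring_scope.

Lemma poch0 x : poch x 0 = 1.
Proof. by rewrite /poch big_ord0. Qed.

Lemma pochS x n : poch x n.+1 = poch x n * (x + n%:R).
Proof. by rewrite /poch big_ord_recr. Qed.

Lemma pochSl x n : poch x n.+1 = x * poch (x + 1) n.
Proof.
rewrite /poch big_ord_recl /= addr0; congr (_ * _).
by apply: eq_bigr => i _; rewrite /bump /= add1n -natr1; ring.
Qed.

Lemma pochD x p q : poch x (p + q) = poch x p * poch (x + p%:R) q.
Proof.
elim: q => [|q IH]; first by rewrite addn0 poch0 mulr1.
by rewrite addnS !pochS IH natrD addrA mulrA.
Qed.

Lemma poch_eq0 x n i : (i < n)%N -> x + i%:R = 0 -> poch x n = 0.
Proof. by move=> lt_in xi0; rewrite -(subnKC lt_in) pochD pochS xi0 mulr0 mul0r. Qed.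

Lemma poch_oppD x n : poch (- (x + n%:R)) n.+1 = (-1) ^+ n.+1 * poch x n.+1.
Proof.
elim: n => [|n IH]; first by rewrite !pochS !poch0 !addr0 !mul1r expr1 mulN1r.
rewrite pochSl.
have -> : - (x + n.+1%:R) + 1 = - (x + n%:R) by rewrite -addn1 natrD; ring.
by rewrite IH [in RHS]pochS [(-1) ^+ n.+2]exprS mulN1r -[_ *+ _]/(n.+1%:R); ring.
Qed.

Lemma poch1 n : poch 1 n = n`!%:R.
Proof.
elim: n => [|n IH]; first by rewrite poch0.
by rewrite pochS IH factS natrM mulrC addrC natr1.
Qed.

Lemma natr_fact_neq0 n : n`!%:R != 0 :> rat.
Proof. by rewrite pnatr_eq0 -lt0n fact_gt0. Qed.

Lemma poch_nat d M : (d <= M)%N -> poch d.+1%:R (M - d) = M`!%:R / d`!%:R.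
Proof.
move=> le_dM; rewrite -poch1 -{2}(subnKC le_dM) pochD poch1 -natr1 addrC.
by field; exact: natr_fact_neq0.
Qed.

Lemma poch_gt0 x n : 0 < x -> 0 < poch x n.
Proof.
move=> x_gt0; elim: n => [|n IH]; first by rewrite poch0.
by rewrite pochS mulr_gt0 // (lt_le_trans x_gt0) // lerDl.
Qed.

(* The coefficient of [z^d] in [(1 - z)^(-x)]. *)
Definition pbin x d := poch x d / d`!%:R.

Lemma pbin0 x : pbin x 0 = 1.
Proof. by rewrite /pbin poch0 divr1. Qed.

Lemma pbinS x d : d.+1%:R * pbin x d.+1 = (x + d%:R) * pbin x d.
Proof.
rewrite /pbin pochS factS natrM.
have dS_neq0 : d.+1%:R != 0 :> rat by rewrite pnatr_eq0.
by rewrite -natr1; field; rewrite natr1 dS_neq0 natr_fact_neq0.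
Qed.

Lemma pbin_vandermonde x y n :
  \sum_(d < n.+1) pbin x d * pbin y (n - d) = pbin (x + y) n.
Proof.
elim: n => [|n IH]; first by rewrite big_ord1 /= !pbin0 mulr1.
apply: (@mulfI _ n.+1%:R); first by rewrite pnatr_eq0.
rewrite pbinS -IH mulr_sumr.
have sum_d : \sum_(d < n.+2) d%:R * (pbin x d * pbin y (n.+1 - d))
           = \sum_(d < n.+1) (x + d%:R) * (pbin x d * pbin y (n - d)).
  rewrite big_ord_recl /= mul0r add0r; apply: eq_bigr => i _.
  by rewrite /bump /= add1n subSS mulrA pbinS mulrA.
have sum_nd : \sum_(d < n.+2) (n.+1 - d)%:R * (pbin x d * pbin y (n.+1 - d))
            = \sum_(d < n.+1) (y + (n - d)%:R) * (pbin x d * pbin y (n - d)).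
  rewrite big_ord_recr /= subnn mul0r addr0; apply: eq_bigr => i _.
  rewrite subSn; first by rewrite mulrCA pbinS mulrCA.
  by rewrite -ltnS.
have -> : \sum_(d < n.+2) n.+1%:R * (pbin x d * pbin y (n.+1 - d))
   = \sum_(d < n.+2) d%:R * (pbin x d * pbin y (n.+1 - d))
     + \sum_(d < n.+2) (n.+1 - d)%:R * (pbin x d * pbin y (n.+1 - d)).
  rewrite -big_split /=; apply: eq_bigr => i _.
  by rewrite -mulrDl -natrD subnKC // -ltnS.
rewrite sum_d sum_nd -big_split mulr_sumr /=; apply: eq_bigr => i _.
rewrite -mulrDl natrB; first by congr (_ * _); ring.
by rewrite -ltnS.
Qed.

Lemma pbin_vandermonde_opp x n :
  \sum_(d < n.+1) pbin x d * pbin (- x) (n - d) = (n == 0)%:R.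
Proof.
rewrite pbin_vandermonde subrr; case: n => [|n]; first by rewrite pbin0.
by rewrite /pbin pochSl !mul0r.
Qed.

Lemma size_prod_leq_sum (R : nzRingType) (I : Type) (r : seq I) (P : pred I)
    (F : I -> {poly R}) (d : I -> nat) :
  (forall i, P i -> (size (F i) <= (d i).+1)%N) ->
  (size (\prod_(i <- r | P i) F i)%R <= (\sum_(i <- r | P i) d i).+1)%N.
Proof.
move=> size_F; elim/big_rec2: _ => [|i s p Pi size_p]; first by rewrite size_poly1.
apply: leq_trans (size_polyMleq _ _) _; have := size_F i Pi; lia.
Qed.

Lemma sum_nat_triangle (V : nmodType) n (F : nat -> nat -> V) :
  \sum_(0 <= i < n) \sum_(i <= j < n) F i j
  = \sum_(0 <= j < n) \sum_(0 <= i < j.+1) F i j.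
Proof.
under eq_bigr => i _ do rewrite (big_nat_widenl i 0) //.
rewrite (exchange_big_dep_nat predT) //=; apply: eq_big_nat => j /andP[_ lt_jn].
by rewrite (big_nat_widen 0 j.+1 n).
Qed.

Lemma sum_coef_poly_conv (R : nzRingType) N (a f : nat -> R) k :
  \sum_(i < k.+1) (\poly_(i < N.+1) a i)`_i * f (k - i)%N
  = \sum_(0 <= i < (minn N k).+1) a i * f (k - i)%N.
Proof.
rewrite -(big_mkord xpredT (fun i => (\poly_(i < N.+1) a i)`_i * f (k - i)%N)).
rewrite (big_cat_nat _ (n := (minn N k).+1)) //=; last by rewrite ltnS geq_minr.
rewrite [X in _ + X]big1_seq ?addr0 => [|i /andP[_]]; last first.
  by rewrite mem_index_iota coef_poly => /andP[lt_Ni lt_ik]; rewrite ifN ?mul0r //; lia.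
rewrite big_nat_cond [RHS]big_nat_cond; apply: eq_bigr => i /andP[/andP[_ lt_i] _].
by rewrite coef_poly ifT //; lia.
Qed.

Section EbasisExpansion.
Variables (a0 : rat) (N : nat).

Definition ebasis p x := poch x p * poch (x + a0 + p%:R) (N - p).

Definition kcoef q l :=
  (-1) ^+ l.+1 * pbin (a0 - 1) (l - q) * pbin (a0 + l%:R + 1) (N - l - 1).

(* The coordinates of [(a0)_N H] in the basis [ebasis], read off from the values
   of [H] at the nodes [0] and [-a0 - l], [l < N]; see [ebasis_expansion]. *)
Definition bcoef (H : {poly rat}) p :=
  if p is q.+1 then \sum_(q <= l < N) kcoef q l * H.[- a0 - l%:R] else H.[0].

Lemma ebasis0_node_eq0 l : (l < N)%N -> ebasis 0 (- a0 - l%:R) = 0.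
Proof.
move=> lt_lN; rewrite /ebasis (@poch_eq0 (- a0 - l%:R + a0 + 0%:R) _ l) ?mulr0 ?subn0 //.
by ring.
Qed.

Lemma ebasis_node_eq0 q l : (q < l < N)%N -> ebasis q.+1 (- a0 - l%:R) = 0.
Proof.
move=> /andP[lt_ql lt_lN].
rewrite /ebasis (@poch_eq0 (- a0 - l%:R + a0 + q.+1%:R) _ (l - q.+1)) ?mulr0 //.
  by lia.
by rewrite natrB // -natr1; ring.
Qed.

Lemma ebasis_node l d : (l + d < N)%N ->
  ebasis (l + d).+1 (- a0 - l%:R)
  = poch (- (a0 + l%:R)) l.+1 * (N - l.+1)`!%:R * pbin (1 - a0) d.
Proof.
move=> lt_ldN; rewrite /ebasis /pbin -addSn pochD subnDA.
have -> : - a0 - l%:R + l.+1%:R = 1 - a0 by rewrite -natr1; ring.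
have -> : - a0 - l%:R + a0 + (l.+1 + d)%:R = d.+1%:R by rewrite natrD -!natr1; ring.
rewrite poch_nat; last by lia.
have -> : - a0 - l%:R = - (a0 + l%:R) by ring.
by field; exact: natr_fact_neq0.
Qed.

Lemma kcoef_ebasis_diag l : (l < N)%N ->
  kcoef l l * ebasis l.+1 (- a0 - l%:R) = poch a0 N.
Proof.
move=> lt_lN; have := @ebasis_node l 0; rewrite !addn0 => ->; last exact: lt_lN.
rewrite poch_oppD /kcoef /pbin subnn !poch0 -subnDA addn1 -[in RHS](subnKC lt_lN) pochD.
have -> : a0 + l%:R + 1 = a0 + l.+1%:R by rewrite -natr1 addrA.
have sign2 : (-1) ^+ l.+1 * (-1) ^+ l.+1 = 1 :> rat.
  by rewrite -exprMn mulrNN mulr1 expr1n.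
move: sign2; set s := (-1) ^+ l.+1 => sign2.
rewrite [LHS](_ : _ = s * s * (poch a0 l.+1 * poch (a0 + l.+1%:R) (N - l.+1))).
  by rewrite sign2 mul1r.
by rewrite fact0 divr1; field; exact: natr_fact_neq0.
Qed.

(* A Chu-Vandermonde convolution kills the off-diagonal entries. *)
Lemma kcoef_ebasis_offdiag l n : (l + n < N)%N -> (0 < n)%N ->
  \sum_(d < n.+1) kcoef (l + d) (l + n) * ebasis (l + d).+1 (- a0 - l%:R) = 0.
Proof.
move=> lt_lnN n_gt0.
pose c := kcoef (l + n) (l + n) * (poch (- (a0 + l%:R)) l.+1 * (N - l.+1)`!%:R).
have term (d : 'I_n.+1) : kcoef (l + d) (l + n) * ebasis (l + d).+1 (- a0 - l%:R)
    = c * (pbin (1 - a0) d * pbin (- (1 - a0)) (n - d)).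
  rewrite ebasis_node; last by rewrite (leq_ltn_trans _ lt_lnN) // leq_add2l -ltnS.
  by rewrite /c /kcoef !subnDl subnn pbin0 opprB; ring.
rewrite (eq_bigr _ (fun d _ => term d)) -mulr_sumr pbin_vandermonde_opp.
by rewrite (negbTE (lt0n_neq0 n_gt0)) mulr0.
Qed.

Lemma kcoef_ebasis_dual l l' : (l < N)%N -> (l' < N)%N ->
  \sum_(0 <= q < l.+1) kcoef q l * ebasis q.+1 (- a0 - l'%:R)
  = (l == l')%:R * poch a0 N.
Proof.
move=> lt_lN lt_l'N.
have [lt_ll'|le_l'l] := ltnP l l'.
  rewrite big1_seq ?(ltn_eqF lt_ll') ?mul0r // => q.
  move=> /andP[_]; rewrite mem_index_iota => /andP[_ lt_ql].
  by rewrite ebasis_node_eq0 ?mulr0 // (leq_trans lt_ql lt_ll') lt_l'N.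
move: lt_lN; have {le_l'l} [n ->] : exists n, l = (l' + n)%N.
  by exists (l - l')%N; rewrite subnKC.
move=> lt_lnN.
rewrite (big_cat_nat _ (n := l')) ?leqW ?leq_addr //= big1_seq ?add0r; last first.
  move=> q /andP[_]; rewrite mem_index_iota => /andP[_ lt_ql'].
  by rewrite ebasis_node_eq0 ?mulr0 // lt_ql' lt_l'N.
rewrite -{1}(add0n l') big_addn -addnS addKn big_mkord.
under eq_bigr do rewrite addnC.
case: n lt_lnN => [|n] lt_lnN.
  by rewrite big_ord1 !addn0 eqxx mul1r kcoef_ebasis_diag.
rewrite kcoef_ebasis_offdiag //.
by rewrite -{2}(addn0 l') eqn_add2l mul0r.
Qed.

Lemma ebasis_expansion_at0 H :
  \sum_(p < N.+1) bcoef H p * ebasis p 0 = poch a0 N * H.[0].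
Proof.
rewrite big_ord_recl big1 ?addr0 => [|p _]; last by rewrite /ebasis pochSl !mul0r mulr0.
by rewrite /ebasis /= poch0 mul1r add0r addr0 subn0 mulrC.
Qed.

Lemma ebasis_expansion_at_node H l : (l < N)%N ->
  \sum_(p < N.+1) bcoef H p * ebasis p (- a0 - l%:R) = poch a0 N * H.[- a0 - l%:R].
Proof.
move=> lt_lN; rewrite big_ord_recl ebasis0_node_eq0 // mulr0 add0r.
rewrite -(big_mkord xpredT (fun q => bcoef H q.+1 * ebasis q.+1 (- a0 - l%:R))) /=.
under eq_bigr do rewrite mulr_suml.
rewrite sum_nat_triangle.
under eq_big_nat => j /andP[_ lt_jN].
  rewrite (eq_bigr (fun q => H.[- a0 - j%:R] * (kcoef q j * ebasis q.+1 (- a0 - l%:R))));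
    last by move=> q _; rewrite mulrAC mulrC.
  rewrite -mulr_sumr kcoef_ebasis_dual //.
  over.
rewrite (bigD1_seq l) ?mem_index_iota ?iota_uniq //= eqxx mul1r mulrC big1 ?addr0 //.
by move=> j /negbTE ->; rewrite mul0r mulr0.
Qed.

Definition ebasis_poly p : {poly rat} :=
  \prod_(i < p) ('X + i%:R%:P) * \prod_(i < N - p) ('X + (a0 + p%:R + i%:R)%:P).

Lemma horner_ebasis_poly p x : (ebasis_poly p).[x] = ebasis p x.
Proof.
rewrite /ebasis_poly /ebasis /poch hornerM !horner_prod.
by congr (_ * _); apply: eq_bigr => i _; rewrite hornerD hornerX hornerC; ring.
Qed.

Lemma size_ebasis_poly p : (p <= N)%N -> (size (ebasis_poly p) <= N.+1)%N.
Proof.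
move=> le_pN; apply: leq_trans (size_polyMleq _ _) _.
have size_lin (c : rat) : (size ('X + c%:P)%R <= 1.+1)%N by rewrite size_XaddC.
have := size_prod_leq_sum (index_enum 'I_p) (P := xpredT) (d := fun=> 1%N)
  (fun i _ => size_lin i%:R).
have := size_prod_leq_sum (index_enum 'I_(N - p)) (P := xpredT) (d := fun=> 1%N)
  (fun i _ => size_lin (a0 + p%:R + i%:R)).
rewrite !sum1_card !card_ord => size_B size_A.
by rewrite -subn1 leq_subLR (leq_trans (leq_add size_A size_B)) //; lia.
Qed.

(* Both sides are polynomials in [x] of degree at most [N] that agree at the
   [N + 1] distinct nodes. *)
Lemma ebasis_expansion (H : {poly rat}) x : 0 < a0 -> (size H <= N.+1)%N ->
  \sum_(p < N.+1) bcoef H p * ebasis p x = poch a0 N * H.[x].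
Proof.
move=> a0_gt0 size_H.
pose D := \sum_(p < N.+1) bcoef H p *: ebasis_poly p - poch a0 N *: H.
have horner_D y : D.[y] = \sum_(p < N.+1) bcoef H p * ebasis p y - poch a0 N * H.[y].
  rewrite /D hornerD hornerN hornerZ horner_sum; congr (_ - _).
  by apply: eq_bigr => p _; rewrite hornerZ horner_ebasis_poly.
suff D0 : D = 0 by apply/eqP; rewrite -subr_eq0 -horner_D D0 horner0.
pose nodes := 0 :: [seq - a0 - l%:R | l <- iota 0 N].
apply: (@roots_geq_poly_eq0 _ D nodes).
- rewrite /= {1}/root horner_D ebasis_expansion_at0 subrr eqxx /=.
  apply/allP => r /mapP[l]; rewrite mem_iota add0n => /andP[_ lt_lN] ->.
  by rewrite /root horner_D ebasis_expansion_at_node // subrr.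
- rewrite /= map_inj_uniq ?iota_uniq ?andbT => [|u v /eqP].
    by apply/mapP => -[l _]; have := ler0n rat l; lra.
  by rewrite (inj_eq (addrI _)) (inj_eq oppr_inj) eqr_nat => /eqP.
- rewrite /= size_map size_iota (leq_trans (size_polyD _ _)) // geq_max.
  rewrite size_polyN (leq_trans (size_scale_leq _ _)) // andbT.
  apply: (big_ind (fun p : {poly rat} => (size p <= N.+1)%N)) => [|p q|p _].
  + by rewrite size_poly0.
  + by move=> size_p size_q; rewrite (leq_trans (size_polyD _ _)) // geq_max size_p.
  + by rewrite (leq_trans (size_scale_leq _ _)) // size_ebasis_poly // -ltnS.
Qed.

Lemma poch_ratio_ebasis (al : rat) t p : 0 < a0 -> 0 < al -> (p <= N)%N ->
  poch al (t + p) / poch (al + a0) (t + p)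
  = poch al t / poch (al + a0) t / poch (al + t%:R + a0) N * ebasis p (al + t%:R).
Proof.
move=> a0_gt0 al_gt0 le_pN.
have t_ge0 : 0 <= t%:R :> rat by [].
have p_ge0 : 0 <= p%:R :> rat by [].
rewrite /ebasis !pochD -[in poch (_ + a0) N](subnKC le_pN) pochD.
have -> : al + a0 + t%:R = al + t%:R + a0 by ring.
have -> : al + t%:R + a0 + p%:R = al + t%:R + p%:R + a0 by ring.
have poch_neq0 y k : 0 < y -> poch y k != 0 by move=> /poch_gt0/lt0r_neq0.
by field; rewrite !poch_neq0 //; lra.
Qed.

Lemma bcoef_ratio_sum (H : {poly rat}) (al : rat) t :
  0 < a0 -> 0 < al -> (size H <= N.+1)%N ->
  \sum_(p < N.+1) bcoef H p * (poch al (t + p) / poch (al + a0) (t + p))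
  = poch al t / poch (al + a0) t / poch (al + t%:R + a0) N
    * (poch a0 N * H.[al + t%:R]).
Proof.
move=> a0_gt0 al_gt0 size_H; rewrite -ebasis_expansion // mulr_sumr.
apply: eq_bigr => p _; have le_pN : (p <= N)%N by rewrite -ltnS.
by rewrite poch_ratio_ebasis //; ring.
Qed.
End EbasisExpansion.

Section NodePoly.
Variables (F : fieldType) (r : nat -> nat -> F) (m : nat) (n : nat -> nat).

Definition node_poly : {poly F} :=
  \prod_(1 <= j < m.+1) \prod_(s < n j) (1 - (r j s)^-1 *: 'X).

Lemma size_node_poly : (size node_poly <= (\sum_(1 <= j < m.+1) n j).+1)%N.
Proof.
apply: size_prod_leq_sum => j _.
have size_lin (c : F) : (size (1 - c *: 'X)%R <= 1.+1)%N.
  rewrite (leq_trans (size_polyD _ _)) // size_polyN geq_max size_poly1.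
  by rewrite (leq_trans (size_scale_leq _ _)) // size_polyX.
have := size_prod_leq_sum (index_enum 'I_(n j)) (P := xpredT) (d := fun=> 1%N)
  (fun s _ => size_lin (r j s)^-1).
by rewrite sum1_card card_ord.
Qed.

Lemma horner_node_poly0 : node_poly.[0] = 1.
Proof.
rewrite /node_poly horner_prod big1 // => j _; rewrite horner_prod big1 // => s _.
by rewrite hornerD hornerN hornerZ hornerX hornerC mulr0 subr0.
Qed.

Hypothesis r_neq0 : forall j s, (1 <= j <= m)%N -> (s < n j)%N -> r j s != 0.

Lemma horner_node_poly x : node_poly.[x]
  = \prod_(1 <= j < m.+1) (\prod_(s < n j) (r j s - x) / \prod_(s < n j) r j s).
Proof.
rewrite /node_poly horner_prod big_nat_cond [RHS]big_nat_cond.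
apply: eq_bigr => j /andP[j_range _]; rewrite horner_prod -prodf_div.
apply: eq_bigr => s _; have := r_neq0 j_range (ltn_ord s).
rewrite hornerD hornerN hornerZ hornerX hornerC => rjs_neq0.
by field.
Qed.

Lemma root_node_poly j s : (1 <= j <= m)%N -> (s < n j)%N -> root node_poly (r j s).
Proof.
move=> j_range lt_s; rewrite /root horner_node_poly prodf_seq_eq0.
apply/hasP; exists j; first by rewrite mem_index_iota.
rewrite mulf_eq0 prodf_seq_eq0; apply/orP; left; apply/hasP.
by exists (Ordinal lt_s); [exact: mem_index_enum | rewrite /= subrr].
Qed.
End NodePoly.

Section PadeApproximants.
Variables (m : nat) (alpha : nat -> rat) (n Nj : nat -> nat).
Hypothesis alpha_gt0 : forall i, (i <= m)%N -> 0 < alpha i.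
Hypothesis Nj_ge : forall j, (1 <= j <= m)%N -> (bigN m n - 1 <= Nj j)%N.

Local Notation N := (bigN m n).

Definition pade_node j s := alpha j + (Nj j)%:R - N%:R + 1 + s%:R.

Definition pade_H := node_poly pade_node m n.

Lemma pade_node_gt0 j s : (1 <= j <= m)%N -> 0 < pade_node j s.
Proof.
move=> j_range; have : (N <= Nj j + 1 + s)%N by have := Nj_ge j_range; lia.
rewrite -(ler_nat rat) !natrD /pade_node.
case/andP: j_range => _ /alpha_gt0; have : 0 <= s%:R :> rat by []; lra.
Qed.

Lemma acoef_bcoef p : (p <= N)%N ->
  acoef alpha m n Nj (N - p) = bcoef (alpha 0) N pade_H p.
Proof.
case: p => [_|q le_qN]; first by rewrite subn0 /acoef eqxx /= horner_node_poly0.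
rewrite /acoef ifN; last by apply/eqP; lia.
rewrite /= (_ : N - 1 - (N - q.+1) = q)%N; last by lia.
apply: eq_big_nat => l _; rewrite /kcoef /pbin; congr (_ * _).
rewrite horner_node_poly => [|j s j_range _]; last exact/lt0r_neq0/pade_node_gt0.
apply: eq_big_nat => j _; congr (_ / _).
by rewrite /poch; apply: eq_bigr => s _; rewrite /pade_node; ring.
Qed.

Lemma Qpoly_neq0 : Qpoly alpha m n Nj != 0.
Proof.
apply/eqP => /(congr1 (fun Q : {poly rat} => Q`_N)).
rewrite coef_poly ltnSn coef0 -[N in acoef _ _ _ _ N]subn0 acoef_bcoef //=.
by rewrite horner_node_poly0 => /eqP; rewrite oner_eq0.
Qed.

Lemma pade_sum_eq0 j k : (1 <= j <= m)%N -> (Nj j < k <= Nj j + n j)%N ->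
  \sum_(0 <= i < N.+1) acoef alpha m n Nj i * phi_coef alpha j (k - i) = 0.
Proof.
move=> j_range /andP[lt_Njk le_k].
have le_Nk : (N <= k)%N by have := Nj_ge j_range; lia.
have le_jm : (j <= m)%N by case/andP: j_range.
transitivity (\sum_(p < N.+1) bcoef (alpha 0) N pade_H p
  * (poch (alpha j) (k - N + p) / poch (alpha j + alpha 0) (k - N + p))).
  rewrite big_nat_rev big_mkord; apply: eq_bigr => p _.
  have le_pN : (p <= N)%N by rewrite -ltnS.
  rewrite add0n subSS acoef_bcoef // /phi_coef.
  by rewrite (_ : k - (N - p) = k - N + p)%N //; lia.
rewrite bcoef_ratio_sum ?alpha_gt0 ?size_node_poly //.
suff /eqP -> : root pade_H (alpha j + (k - N)%:R) by rewrite !mulr0.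
have -> : alpha j + (k - N)%:R = pade_node j (k - Nj j - 1).
  by rewrite /pade_node !natrB; try lia; ring.
have lt_s : (k - Nj j - 1 < n j)%N by lia.
apply: (root_node_poly _ j_range lt_s) => i s i_range _.
exact/lt0r_neq0/pade_node_gt0.
Qed.

Lemma pade_ord_ge j : (1 <= j <= m)%N ->
  ord_ge (Qpoly alpha m n Nj) (phi_coef alpha j) (Ppoly alpha m n Nj j)
         (Nj j + n j + 1).
Proof.
move=> j_range k lt_k; rewrite sum_coef_poly_conv /Ppoly coef_poly.
case: ifP => le_kNj; first by rewrite /ccoef subrr.
rewrite subr0 (minn_idPl _); last by have := Nj_ge j_range; lia.
by apply: pade_sum_eq0 => //; lia.
Qed.
End PadeApproximants.

Theorem theorem1 (m : nat) (alpha : nat -> rat) (n Nj : nat -> nat) :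
  (1 <= m)%N ->
  (forall i, (i <= m)%N -> 0 < alpha i) ->
  (forall i j, (1 <= i)%N -> (i < j)%N -> (j <= m)%N ->
     ~ exists z : int, alpha i - alpha j = z%:~R) ->
  (forall j, (1 <= j <= m)%N -> (0 < n j)%N) ->
  (forall j, (1 <= j <= m)%N -> (0 < Nj j)%N) ->
  (forall j, (1 <= j <= m)%N -> (bigN m n - 1 <= Nj j)%N) ->
  Qpoly alpha m n Nj != 0 /\
  (size (Qpoly alpha m n Nj) <= (bigN m n).+1)%N /\
  (forall j, (1 <= j <= m)%N ->
     (size (Ppoly alpha m n Nj j) <= (Nj j).+1)%N /\
     ord_ge (Qpoly alpha m n Nj) (phi_coef alpha j) (Ppoly alpha m n Nj j)
            (Nj j + n j + 1)).
Proof.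
move=> _ alpha_gt0 _ _ _ Nj_ge.
split; first exact: Qpoly_neq0.
split; first exact: size_poly.
by move=> j j_range; split; [exact: size_poly | exact: pade_ord_ge].
Qed.
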